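(* For $i\in\{1,2\}$ let $\Sigma_{i,\mathbb{T}}$ be the linear time-varying system $x_i(t+1)=A_i(t)x_i(t)+B_i(t)u_i(t)$, $y_i(t)=C_i(t)x_i(t)+D_i(t)u_i(t)$, $t\in\mathbb{T}=\{0,\dots,T-1\}$, with $u_i(t)\in\mathbb{R}^{n_u}$, $y_i(t)\in\mathbb{R}^{n_y}$ and initial state $x_i(0)=x_{i0}$, and let $\mathcal{B}_{i,x_{i0}}$ be its admissible behavior. For each $i$, let test inputs $\mathbf{u}_i^0,\dots,\mathbf{u}_i^{n_uT}\in\mathbb{R}^{n_uT}$ be applied from $x_{i0}$ with outputs $\mathbf{y}_i^k$, where $\mathbf{u}_i^0=0$ and $\operatorname{rank}[\mathbf{u}_i^1,\dots,\mathbf{u}_i^{n_uT}]=n_uT$; let $w_i^k=\operatorname{col}(\mathbf{u}_i^k,\mathbf{y}_i^k)$, $W_i=[w_i^1-w_i^0,\dots,w_i^{n_uT}-w_i^0]$, and let $H_i\in\mathbb{R}^{n_wT\times n_uT}$ be a matrix whose columns form an orthonormal basis of $\operatorname{span}(W_i)$. Then $\mathcal{B}_{1,x_{10}}$ and $\mathcal{B}_{2,x_{20}}$ are similar (i.e. $\mathcal{B}_{1,x_{10}}\cap\mathcal{B}_{2,x_{20}}\neq\emptyset$) if and only if there exist $l_1,l_2\in\mathbb{R}^{n_uT}$ such that $[H_1\ \ H_2]\begin{bmatrix}l_1\\ l_2\end{bmatrix}=w_2^0-w_1^0$. Moreover, the common behavior is $\mathcal{B}_{1,x_{10}}\cap\mathcal{B}_{2,x_{20}}=\{H_1l_1+w_1^0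 : (l_1,l_2)\text{ solves this equation}\}$.
   Context: $n_w=n_u+n_y$. Supervectors over $\mathbb{T}$: $\mathbf{u}_i=[u_i(0)^{\rm T},\dots,u_i(T-1)^{\rm T}]^{\rm T}$, likewise $\mathbf{y}_i,\mathbf{x}_i$. The admissible behavior $\mathcal{B}_{i,x_{i0}}\subseteq\mathbb{R}^{n_wT}$ is the set of all $\operatorname{col}(\mathbf{u}_i,\mathbf{y}_i)$ for which there exists a state supervector $\mathbf{x}_i$ with $x_i(0)=x_{i0}$ such that $(\mathbf{u}_i,\mathbf{y}_i,\mathbf{x}_i)$ satisfies the system equations. $\mathbf{y}_i^k$ denotes the output supervector of $\Sigma_{i,\mathbb{T}}$ under input $\mathbf{u}_i^k$ from $x_i(0)=x_{i0}$. Two admissible behaviors are called similar if their intersection is nonempty. *)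

From HB Require Import structures.
From mathcomp Require Import all_boot all_order all_algebra.
Set Implicit Arguments. Unset Strict Implicit. Unset Printing Implicit Defensive.
Import Order.TTheory GRing.Theory Num.Theory.
Local Open Scope ring_scope.

(* Supervectors over T = {0,...,T-1}: v = col(v(0),...,v(T-1)) with
   v(t) in R^n, stored as a column vector of size T*n, where entry j of
   block t sits at position t*n + j. *)
Lemma sv_index_lt (T n : nat) (t : 'I_T) (j : 'I_n) : (t * n + j < T * n)%N.
Proof.
case: t => t ht; case: j => j hj /=.
apply: (@leq_trans ((t.+1) * n)); first by rewrite mulSn addnC ltn_add2r.
by rewrite leq_mul2r ht orbT.
Qed.

Definition sv_index (T n : nat) (t : 'I_T) (j : 'I_n) : 'I_(T * n) :=
  Ordinal (sv_index_lt t j).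

Definition blk (R : Type) (T n : nat) (v : 'cV[R]_(T * n)) (t : 'I_T) : 'cV[R]_n :=
  \col_(j < n) v (sv_index t j) 0.

Definition behavior (R : pzRingType) (nu ny nx : nat) (T : nat)
  (A : nat -> 'M[R]_nx) (B : nat -> 'M[R]_(nx, nu))
  (C : nat -> 'M[R]_(ny, nx)) (D : nat -> 'M[R]_(ny, nu)) (x0 : 'cV[R]_nx)
  (w : 'cV[R]_(T * nu + T * ny)) : Prop :=
  exists x : nat -> 'cV[R]_nx,
    x 0%N = x0 /\
    forall t : 'I_T,
      x t.+1 = A t *m x t + B t *m blk (usubmx w) t /\
      blk (dsubmx w) t = C t *m x t + D t *m blk (usubmx w) t.

Definition ltv_diffmx (R : pzRingType) (m N : nat) (v : 'I_N.+1 -> 'cV[R]_m) : 'M[R]_(m, N) :=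
  \matrix_(r < m, k < N) (v (lift ord0 k) r 0 - v ord0 r 0).

Definition ltv_colsmx (R : Type) (m N : nat) (v : 'I_N.+1 -> 'cV[R]_m) : 'M[R]_(m, N) :=
  \matrix_(r < m, k < N) v (lift ord0 k) r 0.

Definition orthonormal_basis_of_span (R : numFieldType) (m p q : nat)
  (H : 'M[R]_(m, p)) (W : 'M[R]_(m, q)) : Prop :=
  H^T *m H = 1%:M /\ (H^T == W^T)%MS.

Arguments behavior [R nu ny nx] T A B C D x0 w.

From HB Require Import structures.
From mathcomp Require Import all_boot all_order all_algebra.
From Stdlib Require Import Setoid.
Import Order.TTheory GRing.Theory Num.Theory.
Local Open Scope ring_scope.

(* The behavior from x0 is an affine set w0 + V, where V is the behavior from
   the zero state. An element of V with zero input has zero state, hence zero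
   output, so V is the graph of a linear map on the inputs. The differences of
   the test trajectories lie in V and their inputs span all inputs, so they
   span V: the behavior is w0 + span W = w0 + span H. Two affine sets
   w10 + span H1 and w20 + span H2 meet exactly where H1 l1 + w10 = H2 l2' + w20,
   i.e. where [H1 H2] (l1; -l2') = w20 - w10. *)

Section Blocks.
Variables (R : zmodType) (T n : nat).
Implicit Types v w : 'cV[R]_(T * n).

Lemma blkD v w t : blk (v + w) t = blk v t + blk w t.
Proof. by apply/matrixP => i j; rewrite !mxE. Qed.

Lemma blkB v w t : blk (v - w) t = blk v t - blk w t.
Proof. by apply/matrixP => i j; rewrite !mxE. Qed.

Lemma blk0 t : blk (0 : 'cV[R]_(T * n)) t = 0.
Proof. by apply/matrixP => i j; rewrite !mxE. Qed.

Lemma blk_eq0 v : (forall t, blk v t = 0) -> v = 0.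
Proof.
move=> v0; apply/matrixP => i j; rewrite (ord1 j) mxE.
have n_gt0 : (0 < n)%N by case: n v v0 i {j} => [|//] v _ [i]; rewrite muln0.
have ht : (i %/ n < T)%N by rewrite ltn_divLR.
have hj : (i %% n < n)%N by rewrite ltn_mod.
have -> : i = sv_index (Ordinal ht) (Ordinal hj).
  by apply: val_inj => /=; rewrite -divn_eq.
have := congr1 (fun b : 'cV[R]_n => b (Ordinal hj) ord0) (v0 (Ordinal ht)).
by rewrite !mxE.
Qed.

End Blocks.

Lemma blkZ (R : pzRingType) (T n : nat) (a : R) (v : 'cV[R]_(T * n)) t :
  blk (a *: v) t = a *: blk v t.
Proof. by apply/matrixP => i j; rewrite !mxE. Qed.

Section Behavior.
Variables (R : comPzRingType) (nu ny nx T : nat).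
Variables (A : nat -> 'M[R]_nx) (B : nat -> 'M[R]_(nx, nu))
  (C : nat -> 'M[R]_(ny, nx)) (D : nat -> 'M[R]_(ny, nu)).
Local Notation beh := (behavior T A B C D).

Lemma behavior_sub x0 w w' : beh x0 w -> beh x0 w' -> beh 0 (w - w').
Proof.
move=> [x [x_0 Hx]] [x' [x'_0 Hx']].
exists (fun t => x t - x' t); split; first by rewrite x_0 x'_0 subrr.
move=> t; have [ex ey] := Hx t; have [ex' ey'] := Hx' t.
rewrite !linearB /= !blkB ex ex' ey ey' !mulmxBr.
by split; rewrite opprD addrACA.
Qed.

Lemma behavior_addr x0 w d : beh x0 w -> beh 0 d -> beh x0 (w + d).
Proof.
move=> [x [x_0 Hx]] [x' [x'_0 Hx']].
exists (fun t => x t + x' t); split; first by rewrite x_0 x'_0 addr0.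
move=> t; have [ex ey] := Hx t; have [ex' ey'] := Hx' t.
rewrite !linearD /= !blkD ex ex' ey ey' !mulmxDr.
by split; rewrite addrACA.
Qed.

Lemma behavior0_0 : beh 0 0.
Proof.
exists (fun _ => 0); split=> // t.
by rewrite !linear0 !blk0 !mulmx0 !addr0.
Qed.

Lemma behavior0Z a d : beh 0 d -> beh 0 (a *: d).
Proof.
move=> [x [x_0 Hx]].
exists (fun t => a *: x t); split; first by rewrite x_0 scaler0.
move=> t; have [ex ey] := Hx t.
by rewrite !linearZ /= !blkZ ex ey !scalerDr !scalemxAr.
Qed.

Lemma behavior0_mulmx m (W : 'M[R]_(T * nu + T * ny, m)) c :
  (forall k, beh 0 (col k W)) -> beh 0 (W *m c).
Proof.
move=> Wk; have -> : W *m c = \sum_k c k 0 *: col k W.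
  apply/matrixP => i j; rewrite !mxE summxE; apply: eq_bigr => k _.
  by rewrite !mxE (ord1 j) mulrC.
apply: (big_ind (beh 0)) => [|a b|k _]; first exact: behavior0_0.
  exact: behavior_addr.
exact/behavior0Z/Wk.
Qed.

Lemma behavior0_input_eq0 d : beh 0 d -> usubmx d = 0 -> d = 0.
Proof.
move=> [x [x_0 Hx]] u0.
have blk_u t : blk (usubmx d) t = 0 by rewrite u0 blk0.
have x0 t : (t <= T)%N -> x t = 0.
  elim: t => [//|t IH] ht; have [ex _] := Hx (Ordinal ht).
  by rewrite /= in ex; rewrite ex IH ?(ltnW ht) // blk_u !mulmx0 addr0.
have y0 : dsubmx d = 0.
  apply: blk_eq0 => t; have [_ ey] := Hx t.
  by rewrite ey blk_u x0 ?(ltnW (ltn_ord t)) // !mulmx0 addr0.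
by rewrite -[d]vsubmxK u0 y0 col_mx0.
Qed.

End Behavior.

Lemma col_ltv_diffmx (R : pzRingType) m N (v : 'I_N.+1 -> 'cV[R]_m) k :
  col k (ltv_diffmx v) = v (lift ord0 k) - v ord0.
Proof. by apply/matrixP => i j; rewrite !mxE (ord1 j). Qed.

Lemma usubmx_ltv_diffmx (R : pzRingType) m1 m2 N
    (u : 'I_N.+1 -> 'cV[R]_m1) (y : 'I_N.+1 -> 'cV[R]_m2) :
  usubmx (ltv_diffmx (fun k => col_mx (u k) (y k))) = ltv_diffmx u.
Proof. by apply/matrixP => i j; rewrite !mxE (unsplitK (inl i)). Qed.

Lemma ltv_diffmx_colsmx (R : pzRingType) m N (v : 'I_N.+1 -> 'cV[R]_m) :
  v ord0 = 0 -> ltv_diffmx v = ltv_colsmx v.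
Proof. by move=> v0; apply/matrixP => i j; rewrite !mxE v0 mxE subr0. Qed.

Lemma colspanP (F : fieldType) m n (W : 'M[F]_(m, n)) (v : 'cV[F]_m) :
  reflect (exists c, v = W *m c) (v^T <= W^T)%MS.
Proof.
apply: (iffP submxP) => [[E vE]|[c ->]]; last by exists c^T; rewrite trmx_mul.
by exists E^T; rewrite -[v]trmxK vE trmx_mul trmxK.
Qed.

Lemma behavior_test_span {F : fieldType} {nu ny nx T : nat}
    {A : nat -> 'M[F]_nx} {B : nat -> 'M[F]_(nx, nu)}
    {C : nat -> 'M[F]_(ny, nx)} {D : nat -> 'M[F]_(ny, nu)} {x0 : 'cV[F]_nx}
    {u : 'I_(T * nu).+1 -> 'cV[F]_(T * nu)} {y : 'I_(T * nu).+1 -> 'cV[F]_(T * ny)}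
    (w : 'cV[F]_(T * nu + T * ny)) :
  u ord0 = 0 -> \rank (ltv_colsmx u) = (T * nu)%N ->
  (forall k, behavior T A B C D x0 (col_mx (u k) (y k))) ->
  let w0 := col_mx (u ord0) (y ord0) in
  let W := ltv_diffmx (fun k => col_mx (u k) (y k)) in
  behavior T A B C D x0 w <-> ((w - w0)^T <= W^T)%MS.
Proof.
move=> u0 rk test w0 W.
have W_beh c : behavior T A B C D x0 (w0 + W *m c).
  apply: behavior_addr; first exact: test.
  by apply: behavior0_mulmx => k; rewrite col_ltv_diffmx; apply: behavior_sub.
split=> [bw|/colspanP [c /eqP]]; last by rewrite subr_eq addrC => /eqP ->.
apply/colspanP; exists (invmx (ltv_colsmx u) *m usubmx w).
have uW : usubmx W = ltv_colsmx u.
  by rewrite usubmx_ltv_diffmx ltv_diffmx_colsmx.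
have U_unit : ltv_colsmx u \in unitmx by rewrite -row_free_unit /row_free rk.
apply/eqP; rewrite -subr_eq0 -addrA -opprD; apply/eqP.
apply: behavior0_input_eq0; first exact: behavior_sub bw (W_beh _).
by rewrite !linearB linearD /= -mul_usub_mx uW mulKVmx // col_mxKu u0 add0r subrr.
Qed.

Lemma behavior_orthonormal_span {R : numFieldType} {nu ny nx T : nat}
    {A : nat -> 'M[R]_nx} {B : nat -> 'M[R]_(nx, nu)}
    {C : nat -> 'M[R]_(ny, nx)} {D : nat -> 'M[R]_(ny, nu)} {x0 : 'cV[R]_nx}
    {u : 'I_(T * nu).+1 -> 'cV[R]_(T * nu)} {y : 'I_(T * nu).+1 -> 'cV[R]_(T * ny)}
    {H : 'M[R]_(T * nu + T * ny, T * nu)} (w : 'cV[R]_(T * nu + T * ny)) :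
  u ord0 = 0 -> \rank (ltv_colsmx u) = (T * nu)%N ->
  (forall k, behavior T A B C D x0 (col_mx (u k) (y k))) ->
  orthonormal_basis_of_span H (ltv_diffmx (fun k => col_mx (u k) (y k))) ->
  behavior T A B C D x0 w <-> exists l, w = H *m l + col_mx (u ord0) (y ord0).
Proof.
(* Only the span of H matters. *)
move=> u0 rk test [_ /eqmxP HW].
rewrite (behavior_test_span w u0 rk test) -HW.
split=> [/colspanP [l /eqP]|[l ->]]; last by apply/colspanP; exists l; rewrite addrK.
by rewrite subr_eq => /eqP ->; exists l.
Qed.

Lemma affine_meetP (R : pzRingType) m p q (H1 : 'M[R]_(m, p)) (H2 : 'M[R]_(m, q))
    (a1 a2 w : 'cV[R]_m) :
  ((exists l1, w = H1 *m l1 + a1) /\ (exists l2, w = H2 *m l2 + a2)) <->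
  (exists l1 l2, row_mx H1 H2 *m col_mx l1 l2 = a2 - a1 /\ w = H1 *m l1 + a1).
Proof.
split=> [[[l1 w1] [l2 w2]]|[l1 [l2 [e w1]]]].
  exists l1, (- l2); split=> //.
  have e1 : H1 *m l1 = w - a1 by rewrite w1 addrK.
  have e2 : H2 *m l2 = w - a2 by rewrite w2 addrK.
  by rewrite mul_row_col mulmxN e1 e2 opprB addrC addrA subrK.
split; first by exists l1.
move: e; rewrite mul_row_col => /(canRL (addrK (H2 *m l2))) e.
by exists (- l2); rewrite w1 e mulmxN addrAC subrK addrC.
Qed.

Theorem lemma2 (R : realFieldType) (nu ny T n1 n2 : nat)
  (A1 : nat -> 'M[R]_n1) (B1 : nat -> 'M[R]_(n1, nu))
  (C1 : nat -> 'M[R]_(ny, n1)) (D1 : nat -> 'M[R]_(ny, nu)) (x10 : 'cV[R]_n1)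
  (A2 : nat -> 'M[R]_n2) (B2 : nat -> 'M[R]_(n2, nu))
  (C2 : nat -> 'M[R]_(ny, n2)) (D2 : nat -> 'M[R]_(ny, nu)) (x20 : 'cV[R]_n2)
  (u1 u2 : 'I_(T * nu).+1 -> 'cV[R]_(T * nu))
  (y1 y2 : 'I_(T * nu).+1 -> 'cV[R]_(T * ny))
  (H1 H2 : 'M[R]_(T * nu + T * ny, T * nu)) :
  u1 ord0 = 0 -> u2 ord0 = 0 ->
  \rank (ltv_colsmx u1) = (T * nu)%N -> \rank (ltv_colsmx u2) = (T * nu)%N ->
  (forall k, behavior T A1 B1 C1 D1 x10 (col_mx (u1 k) (y1 k))) ->
  (forall k, behavior T A2 B2 C2 D2 x20 (col_mx (u2 k) (y2 k))) ->
  orthonormal_basis_of_span H1 (ltv_diffmx (fun k => col_mx (u1 k) (y1 k))) ->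
  orthonormal_basis_of_span H2 (ltv_diffmx (fun k => col_mx (u2 k) (y2 k))) ->
  let w10 := col_mx (u1 ord0) (y1 ord0) in
  let w20 := col_mx (u2 ord0) (y2 ord0) in
  ((exists w, behavior T A1 B1 C1 D1 x10 w /\ behavior T A2 B2 C2 D2 x20 w) <->
   (exists l1 l2 : 'cV[R]_(T * nu),
      row_mx H1 H2 *m col_mx l1 l2 = w20 - w10)) /\
  (forall w, (behavior T A1 B1 C1 D1 x10 w /\ behavior T A2 B2 C2 D2 x20 w) <->
   (exists l1 l2 : 'cV[R]_(T * nu),
      row_mx H1 H2 *m col_mx l1 l2 = w20 - w10 /\ w = H1 *m l1 + w10)).
Proof.
move=> u10 u20 rk1 rk2 test1 test2 H1W H2W w10 w20.
have common w : (behavior T A1 B1 C1 D1 x10 w /\ behavior T A2 B2 C2 D2 x20 w) <->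
    (exists l1 l2, row_mx H1 H2 *m col_mx l1 l2 = w20 - w10 /\ w = H1 *m l1 + w10).
  rewrite (behavior_orthonormal_span w u10 rk1 test1 H1W).
  rewrite (behavior_orthonormal_span w u20 rk2 test2 H2W).
  exact: affine_meetP.
split=> //; split=> [[w /common [l1 [l2 [e _]]]]|[l1 [l2 e]]]; first by exists l1, l2.
by exists (H1 *m l1 + w10); apply/common; exists l1, l2.
Qed.
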